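(* If $L_1, L_2 \subseteq \Sigma^*$ are regular languages, then $L_1 \stackrel{\rm pgi}{\leftarrow} L_2$ and $L_1 \stackrel{\rm sgi}{\leftarrow} L_2$ are regular.
   Context: Prefix-guided insertion of a string $y$ into a string $x$: $x \stackrel{\rm pgi}{\leftarrow} y = \{ x_1 y_1 y_2 x_2 \mid x = x_1 y_1 x_2,\ y = y_1 y_2,\ y_1 \neq \varepsilon \}$. Suffix-guided insertion: $x \stackrel{\rm sgi}{\leftarrow} y = \{ x_1 y_1 y_2 x_2 \mid x = x_1 y_2 x_2,\ y = y_1 y_2,\ y_2 \neq \varepsilon \}$. Both are extended to languages by taking the union over all $x \in L_1$, $y \in L_2$. *)

From mathcomp Require Import all_boot.
Set Implicit Arguments. Unset Strict Implicit. Unset Printing Implicit Defensive.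

Definition word (Sigma : finType) := seq Sigma.
Definition lang (Sigma : finType) := word Sigma -> Prop.

Record dfa (Sigma : finType) := DFA {
  dfa_state : finType;
  dfa_start : dfa_state;
  dfa_final : {pred dfa_state};
  dfa_trans : dfa_state -> Sigma -> dfa_state
}.
Arguments dfa_state {Sigma} _.
Arguments dfa_start {Sigma} _.
Arguments dfa_final {Sigma} _.
Arguments dfa_trans {Sigma} _ _ _.

Definition dfa_run (Sigma : finType) (M : dfa Sigma) (q : dfa_state M) (w : word Sigma)
  : dfa_state M := foldl (dfa_trans M) q w.

Definition dfa_accepts (Sigma : finType) (M : dfa Sigma) (w : word Sigma) : bool :=
  dfa_final M (dfa_run (dfa_start M) w).

Definition regular (Sigma : finType) (L : lang Sigma) : Prop :=
  exists M : dfa Sigma, forall w, L w <-> dfa_accepts M w.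

Definition pgi (Sigma : finType) (L1 L2 : lang Sigma) : lang Sigma :=
  fun w => exists x y x1 x2 y1 y2 : word Sigma,
    L1 x /\ L2 y /\ [/\ x = x1 ++ y1 ++ x2, y = y1 ++ y2, y1 <> [::]
      & w = x1 ++ y1 ++ y2 ++ x2].

Definition sgi (Sigma : finType) (L1 L2 : lang Sigma) : lang Sigma :=
  fun w => exists x y x1 x2 y1 y2 : word Sigma,
    L1 x /\ L2 y /\ [/\ x = x1 ++ y2 ++ x2, y = y1 ++ y2, y2 <> [::]
      & w = x1 ++ y1 ++ y2 ++ x2].

From mathcomp Require Import all_boot.
Set Implicit Arguments. Unset Strict Implicit. Unset Printing Implicit Defensive.

(* Whether x1 y1 x2 is in L1 and y1 y2 is in L2
   depends only on the states p, p' reached by the first DFA after x1 and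
   x1 y1, and on the state q reached by the second DFA after y1.  Hence both
   insertions are finite unions, over such triples (p, p', q), of
   concatenations of intersections of languages recognised by the two DFAs
   with modified start and final states, and regular languages are closed
   under all of these operations. *)

Lemma rcons_eq_cat (T : Type) (w u v : seq T) a :
  rcons w a = u ++ v <->
  (u = rcons w a /\ v = [::]) \/ exists2 v', v = rcons v' a & w = u ++ v'.
Proof.
case/lastP: v => [|v b]; rewrite ?cats0 -?rcons_cat.
  by split=> [->|[[->]|[[]]]]; [left|..].
split=> [/rcons_inj[-> ->]|[[_]|[v' /rcons_inj[-> ->] ->]]] //.
  by right; exists v.
by case: (v).
Qed.

Section Regular.
Variable Sigma : finType.
Implicit Types (L : lang Sigma) (w u v : word Sigma).

Lemma dfa_run_cat (M : dfa Sigma) (p : dfa_state M) u v :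
  dfa_run p (u ++ v) = dfa_run (dfa_run p u) v.
Proof. exact: foldl_cat. Qed.

Lemma dfa_run_rcons (M : dfa Sigma) (p : dfa_state M) w a :
  dfa_run p (rcons w a) = dfa_trans M (dfa_run p w) a.
Proof. exact: foldl_rcons. Qed.

Lemma regular_ext L L' : (forall w, L w <-> L' w) -> regular L' -> regular L.
Proof. by move=> eqL [M HM]; exists M => w; apply: iff_trans (eqL w) (HM w). Qed.

Definition reach (M : dfa Sigma) (p : dfa_state M) (X : pred (dfa_state M))
  : lang Sigma := fun w => X (dfa_run p w).

Lemma regular_reach (M : dfa Sigma) (p : dfa_state M) X : regular (reach p X).
Proof. by exists (DFA p X (dfa_trans M)). Qed.

Lemma regular0 : regular (fun _ : word Sigma => False).
Proof. by exists (@DFA Sigma unit tt pred0 (fun _ _ => tt)). Qed.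

Lemma regular_nonempty : regular (fun w => w != [::]).
Proof.
pose M := @DFA Sigma bool false id (fun _ _ => true).
exists M => -[|a w] //; rewrite /dfa_accepts /=.
by elim: w => //= *; split.
Qed.

Definition dfa_prod (op : bool -> bool -> bool) (M1 M2 : dfa Sigma) : dfa Sigma :=
  @DFA Sigma (dfa_state M1 * dfa_state M2)%type (dfa_start M1, dfa_start M2)
    [pred pq | op (dfa_final M1 pq.1) (dfa_final M2 pq.2)]
    (fun pq a => (dfa_trans M1 pq.1 a, dfa_trans M2 pq.2 a)).

Lemma dfa_accepts_prod op (M1 M2 : dfa Sigma) w :
  dfa_accepts (dfa_prod op M1 M2) w = op (dfa_accepts M1 w) (dfa_accepts M2 w).
Proof.
have run_prod pq :
    @dfa_run _ (dfa_prod op M1 M2) pq w = (dfa_run pq.1 w, dfa_run pq.2 w).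
  by elim: w pq => [|a w IH] [p q] //; apply: IH.
by rewrite /dfa_accepts run_prod.
Qed.

Lemma regularI L1 L2 : regular L1 -> regular L2 -> regular (fun w => L1 w /\ L2 w).
Proof.
move=> [M1 HM1] [M2 HM2]; exists (dfa_prod andb M1 M2) => w.
rewrite dfa_accepts_prod.
by split=> [[/HM1 -> /HM2 ->] | /andP[/HM1 ? /HM2 ?]].
Qed.

Lemma regularU L1 L2 : regular L1 -> regular L2 -> regular (fun w => L1 w \/ L2 w).
Proof.
move=> [M1 HM1] [M2 HM2]; exists (dfa_prod orb M1 M2) => w.
rewrite dfa_accepts_prod.
by split=> [[/HM1 -> | /HM2 ->] | /orP[/HM1 | /HM2]]; rewrite ?orbT; auto.
Qed.

Lemma regular_bigcup (I : finType) (L : I -> lang Sigma) :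
  (forall i, regular (L i)) -> regular (fun w => exists i, L i w).
Proof.
move=> regL.
have regS (s : seq I) : regular (fun w => exists2 i, i \in s & L i w).
  elim: s => [|i s IH].
    by apply: regular_ext regular0 => w; split=> [[]|].
  apply: regular_ext (regularU (regL i) IH) => w; split.
    by case=> j /[!inE] /orP[/eqP-> | sj Lj]; [left | right; exists j].
  by case=> [Li | [j sj Lj]]; [exists i; rewrite ?inE ?eqxx | exists j; rewrite ?inE ?sj ?orbT].
apply: regular_ext (regS (enum I)) => w.
by split=> [[i] | [i _]]; exists i; rewrite ?mem_enum.
Qed.

Definition conc L1 L2 : lang Sigma :=
  fun w => exists u v, [/\ w = u ++ v, L1 u & L2 v].

Section Concatenation.
Variables M1 M2 : dfa Sigma.
Local Notation Q1 := (dfa_state M1).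
Local Notation Q2 := (dfa_state M2).
Local Notation run1 := (dfa_run (dfa_start M1)).
Local Notation run2 := (dfa_run (dfa_start M2)).

Definition launch (p : Q1) (X : {set Q2}) : {set Q2} :=
  if dfa_final M1 p then dfa_start M2 |: X else X.

(* The second component collects the states of M2 after every suffix whose
   complementary prefix is accepted by M1. *)
Definition dfa_conc : dfa Sigma :=
  @DFA Sigma (Q1 * {set Q2})%type
    (dfa_start M1, launch (dfa_start M1) set0)
    [pred pX : Q1 * {set Q2} | [exists q in pX.2, dfa_final M2 q]]
    (fun pX a => let p := dfa_trans M1 pX.1 a in
                 (p, launch p [set dfa_trans M2 q a | q in pX.2])).

Local Notation run := (dfa_run (dfa_start dfa_conc)).

Lemma in_launch p X q :
  (q \in launch p X) = (dfa_final M1 p && (q == dfa_start M2)) || (q \in X).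
Proof. by rewrite /launch; case: (dfa_final M1 p); rewrite ?inE. Qed.

Lemma dfa_conc_run1 w : (run w).1 = run1 w.
Proof. by elim/last_ind: w => // w a IH; rewrite !dfa_run_rcons /= IH. Qed.

Lemma dfa_conc_run2P w q :
  q \in (run w).2 <-> exists u v, [/\ w = u ++ v, dfa_accepts M1 u & q = run2 v].
Proof.
elim/last_ind: w q => [|w a IH] q.
  rewrite /= in_launch in_set0 orbF; split=> [/andP[acc /eqP->] | ].
    by exists [::], [::].
  by case=> -[|? ?] [[|? ?] []] // _ acc ->; apply/andP.
rewrite dfa_run_rcons /= in_launch dfa_conc_run1 -dfa_run_rcons; split.
  case/orP=> [/andP[acc /eqP->] | /imsetP[q' /IH[u [v [-> acc ->]]] ->]].
    by exists (rcons w a), [::]; rewrite cats0.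
  by exists u, (rcons v a); rewrite rcons_cat dfa_run_rcons.
case=> u [v [/rcons_eq_cat[[-> ->] | [v' -> Ew]] acc ->]].
  by apply/orP; left; apply/andP.
apply/orP; right; apply/imsetP; exists (run2 v'); last by rewrite dfa_run_rcons.
by apply/IH; exists u, v'.
Qed.

End Concatenation.

Lemma regular_conc L1 L2 : regular L1 -> regular L2 -> regular (conc L1 L2).
Proof.
move=> [M1 HM1] [M2 HM2]; exists (dfa_conc M1 M2) => w.
rewrite /dfa_accepts /=; split.
  case=> u [v [-> /HM1 acc1 /HM2 acc2]]; apply/existsP.
  exists (dfa_run (dfa_start M2) v); apply/andP; split=> //.
  by apply/dfa_conc_run2P; exists u, v.
case/existsP=> q /andP[/dfa_conc_run2P[u [v [-> acc1 ->]]] acc2].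
by exists u, v; split; [| apply/HM1 | apply/HM2].
Qed.

End Regular.

Section GuidedInsertion.
Variables (Sigma : finType) (M1 M2 : dfa Sigma) (L1 L2 : lang Sigma).
Hypothesis L1P : forall w, L1 w <-> dfa_accepts M1 w.
Hypothesis L2P : forall w, L2 w <-> dfa_accepts M2 w.
Local Notation s1 := (dfa_start M1).
Local Notation s2 := (dfa_start M2).
Local Notation F1 := (dfa_final M1).
Local Notation F2 := (dfa_final M2).

Lemma pgi_split w : pgi L1 L2 w <->
  exists p p' q, conc (reach s1 (pred1 p))
    (conc (fun y1 => reach p (pred1 p') y1 /\ reach s2 (pred1 q) y1 /\ y1 != [::])
       (conc (reach q F2) (reach p' F1))) w.
Proof.
rewrite /conc /reach /=; split.
  case=> x [y [x1 [x2 [y1 [y2 [/L1P acc1 [/L2P acc2 [Ex Ey y1_ne ->]]]]]]]].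
  subst x y; move: acc1 acc2; rewrite /dfa_accepts !dfa_run_cat => acc1 acc2.
  exists (dfa_run s1 x1), (dfa_run s1 (x1 ++ y1)), (dfa_run s2 y1).
  exists x1, (y1 ++ y2 ++ x2); split=> //.
  exists y1, (y2 ++ x2); rewrite dfa_run_cat; split=> //.
    by rewrite !eqxx; split=> //; split=> //; apply/eqP.
  by exists y2, x2.
case=> p [p' [q [x1 [_ [-> /eqP run_x1 [y1 [_ [-> [/eqP run_y1 [/eqP run2_y1 y1_ne]]
  [y2 [x2 [-> acc2 acc1]]]]]]]]]]].
exists (x1 ++ y1 ++ x2), (y1 ++ y2), x1, x2, y1, y2; split; [|split].
- by apply/L1P; rewrite /dfa_accepts !dfa_run_cat run_x1 run_y1.
- by apply/L2P; rewrite /dfa_accepts dfa_run_cat run2_y1.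
- by split=> //; apply/eqP.
Qed.

Lemma sgi_split w : sgi L1 L2 w <->
  exists p p' q, conc (reach s1 (pred1 p))
    (conc (reach s2 (pred1 q))
       (conc (fun y2 => reach p (pred1 p') y2 /\ reach q F2 y2 /\ y2 != [::])
          (reach p' F1))) w.
Proof.
rewrite /conc /reach /=; split.
  case=> x [y [x1 [x2 [y1 [y2 [/L1P acc1 [/L2P acc2 [Ex Ey y2_ne ->]]]]]]]].
  subst x y; move: acc1 acc2; rewrite /dfa_accepts !dfa_run_cat => acc1 acc2.
  exists (dfa_run s1 x1), (dfa_run s1 (x1 ++ y2)), (dfa_run s2 y1).
  exists x1, (y1 ++ y2 ++ x2); split=> //.
  exists y1, (y2 ++ x2); split=> //.
  exists y2, x2; rewrite dfa_run_cat; split=> //; split=> //; split=> //; exact/eqP.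
case=> p [p' [q [x1 [_ [-> /eqP run_x1 [y1 [_ [-> /eqP run2_y1
  [y2 [x2 [-> [/eqP run_y2 [acc2 y2_ne]] acc1]]]]]]]]]]].
exists (x1 ++ y2 ++ x2), (y1 ++ y2), x1, x2, y1, y2; split; [|split].
- by apply/L1P; rewrite /dfa_accepts !dfa_run_cat run_x1 run_y2.
- by apply/L2P; rewrite /dfa_accepts dfa_run_cat run2_y1.
- by split=> //; apply/eqP.
Qed.

Lemma regular_pgi : regular (pgi L1 L2).
Proof.
apply: regular_ext pgi_split _; do 3!apply: regular_bigcup => ?.
apply: regular_conc (regular_reach _ _) (regular_conc _ (regular_conc _ _));
  try exact: regular_reach.
apply: regularI; first exact: regular_reach.
by apply: regularI; [exact: regular_reach | exact: regular_nonempty].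
Qed.

Lemma regular_sgi : regular (sgi L1 L2).
Proof.
apply: regular_ext sgi_split _; do 3!apply: regular_bigcup => ?.
apply: regular_conc (regular_reach _ _) (regular_conc (regular_reach _ _) _).
apply: regular_conc (regular_reach _ _).
apply: regularI; first exact: regular_reach.
by apply: regularI; [exact: regular_reach | exact: regular_nonempty].
Qed.

End GuidedInsertion.

Theorem proposition4p3 (Sigma : finType) (L1 L2 : lang Sigma) :
  regular L1 -> regular L2 -> regular (pgi L1 L2) /\ regular (sgi L1 L2).
Proof.
case=> M1 L1P [M2 L2P]; split; [exact: regular_pgi L1P L2P | exact: regular_sgi L1P L2P].
Qed.
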